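(* Let $\chi\in\chi(G)$ be a character and $\lambda\in\Lambda^\chi$. If $C\subset A\subset[n]$ are subsets with $L(C)\subset S^\chi_\lambda$ and $L(A)\subset S^\chi_\lambda$, then $L(B)\subset S^\chi_\lambda$ for every $B$ with $C\subset B\subset A$.
   Context: $G$ diagonalizable over $\mathbf C$ acting on $X=\mathbf A^n_{\mathbf C}$ by $g\cdot x=(\chi_1(g)x_1,\dots,\chi_n(g)x_n)$. $\chi(G)$ characters, $\Gamma(G)$ one-parameter subgroups, pairing $\chi(\lambda(t))=t^{\langle\chi,\lambda\rangle}$; fixed norm on $\Gamma(G)$ from an inner product on $\Gamma(G)_{\mathbf R}$ integral on $\Gamma(G)$. $[n]=\{1,\dots,n\}$. $x$ is $\chi$-unstable if some $\lambda$ with $\lim_{t\to0}\lambda(t)x$ existing has $\langle\chi,\lambda\rangle<0$; for unstable $x$, $\lambda_{\chi,x}$ is the unique indivisible one-parameter subgroup with existing limit minimizing $\langle\chi,\lambda\rangle/\|\lambda\|$ among nonzero such. $\Lambda^\chi=\{\lambda_{\chi,x}\}$, $S^\chi_\lambda=\{x\text{ unstable}:\lambda_{\chi,x}=\lambda\}$. For $S\subset[n]$, $L(S)=\{x:x_i\ne0\iff i\in S\}$. *)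

From mathcomp Require Import all_boot all_order all_algebra.
From mathcomp Require Import complex.
From mathcomp Require Import all_classical all_reals all_analysis.
Import numFieldNormedType.Exports.
Set Implicit Arguments. Unset Strict Implicit. Unset Printing Implicit Defensive.
Import Order.TTheory GRing.Theory Num.Theory.
Local Open Scope ring_scope.
Local Open Scope classical_set_scope.

(* Model of a diagonalizable group G acting diagonally on A^n_C.
   Gamma(G) = group of one-parameter subgroups, identified with Z^r
   (row vectors 'rV[int]_r).  A character chi of G is recorded through the
   linear form <chi, .> on Gamma(G), i.e. by a vector in Z^r with
   <chi, lam> = \sum_j chi_j lam_j.  The action is given by the characters
   w i (i < n): g . x = (chi_1(g) x_1, ..., chi_n(g) x_n), so that
   lam(t) . x = (t^<chi_1,lam> x_1, ..., t^<chi_n,lam> x_n).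
   The norm on Gamma(G) comes from an inner product given by an integral
   symmetric positive definite matrix Q (Gram matrix on the basis of Gamma). *)

Definition CC (R : realType) : numFieldType := R[i].

Definition pairing (r : nat) (chi lam : 'rV[int]_r) : int :=
  \sum_(j < r) chi 0 j * lam 0 j.

Definition act (R : realType) (n r : nat) (w : 'I_n -> 'rV[int]_r)
  (lam : 'rV[int]_r) (t : CC R) (x : 'rV[CC R]_n) : 'rV[CC R]_n :=
  \row_(i < n) (t ^ (pairing (w i) lam) * x 0 i).

Definition lim_exists (R : realType) (n r : nat) (w : 'I_n -> 'rV[int]_r)
  (lam : 'rV[int]_r) (x : 'rV[CC R]_n) : Prop :=
  exists l : 'rV[CC R]_n,
    (fun t : CC R => act w lam t x) @ (0 : CC R)^' --> l.

Definition unstable (R : realType) (n r : nat) (w : 'I_n -> 'rV[int]_r)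
  (chi : 'rV[int]_r) (x : 'rV[CC R]_n) : Prop :=
  exists lam : 'rV[int]_r, lim_exists w lam x /\ (pairing chi lam < 0)%R.

Definition normQ (R : realType) (r : nat) (Q : 'M[int]_r) (lam : 'rV[int]_r) : R :=
  Num.sqrt (((lam *m Q *m lam^T) 0 0)%:~R).

Definition slope (R : realType) (r : nat) (Q : 'M[int]_r) (chi lam : 'rV[int]_r) : R :=
  (pairing chi lam)%:~R / normQ R Q lam.

Definition indivisible (r : nat) (lam : 'rV[int]_r) : Prop :=
  lam != 0 /\ forall (k : int) (mu : 'rV[int]_r), lam = k *: mu -> k = 1 \/ k = -1.

Definition minimizer (R : realType) (n r : nat) (w : 'I_n -> 'rV[int]_r)
  (Q : 'M[int]_r) (chi lam : 'rV[int]_r) (x : 'rV[CC R]_n) : Prop :=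
  [/\ lam != 0, lim_exists w lam x &
      forall mu : 'rV[int]_r, mu != 0 -> lim_exists w mu x ->
        slope R Q chi lam <= slope R Q chi mu].

Definition in_S (R : realType) (n r : nat) (w : 'I_n -> 'rV[int]_r)
  (Q : 'M[int]_r) (chi lam : 'rV[int]_r) (x : 'rV[CC R]_n) : Prop :=
  [/\ unstable w chi x, indivisible lam, minimizer w Q chi lam x &
      forall mu : 'rV[int]_r, indivisible mu -> minimizer w Q chi mu x -> mu = lam].

Definition in_Lambda (R : realType) (n r : nat) (w : 'I_n -> 'rV[int]_r)
  (Q : 'M[int]_r) (chi lam : 'rV[int]_r) : Prop :=
  exists x : 'rV[CC R]_n, in_S w Q chi lam x.

Definition in_L (R : realType) (n : nat) (S : {set 'I_n}) (x : 'rV[CC R]_n) : Prop :=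
  forall i : 'I_n, x 0 i != 0 <-> i \in S.

Definition inner_product (R : realType) (r : nat) (Q : 'M[int]_r) : Prop :=
  Q^T = Q /\
  forall v : 'rV[R]_r, v != 0 -> 0 < (v *m map_mx (fun z : int => z%:~R) Q *m v^T) 0 0.

From mathcomp Require Import all_boot all_order all_algebra.
From mathcomp Require Import complex.
From mathcomp Require Import all_classical all_reals all_analysis.
Import numFieldNormedType.Exports.
Set Implicit Arguments. Unset Strict Implicit. Unset Printing Implicit Defensive.
Import Order.TTheory GRing.Theory Num.Theory.
Local Open Scope ring_scope.

(* Whether lim_{t -> 0} lam(t) x exists depends only on the support of x, and
   shrinking the support can only create limits: x_i = c_i y_i coordinatewise
   turns a limit for y into one for x.  So for C ⊂ B ⊂ A the one-parameter
   subgroups admissible at a point of L(B) lie between those admissible at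
   points of L(A) and of L(C); since lam is admissible at L(A) and optimal
   and unique at L(C), it is admissible, optimal and unique at L(B). *)

Lemma continuous_row_scale (K : numFieldType) (n : nat) (c : 'I_n -> K) :
  continuous (fun v : 'rV[K]_n => \row_j (c j * v 0 j)).
Proof.
move=> v A [P /= nbhsP sub].
pose P' (i : 'I_1) (j : 'I_n) (z : K) := P i j (c j * z).
exists P' => [i j|u /= P'u].
  have := nbhsP i j; rewrite mxE (ord1 i).
  exact: mulrl_continuous.
by apply: sub => i j; rewrite mxE (ord1 i); exact: P'u.
Qed.

Section LimitsAndSupports.
Variables (R : realType) (n r : nat) (w : 'I_n -> 'rV[int]_r).

Lemma lim_exists_sub_support (mu : 'rV[int]_r) (x y : 'rV[CC R]_n) :
  (forall i, y 0 i = 0 -> x 0 i = 0) ->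
  lim_exists w mu y -> lim_exists w mu x.
Proof.
move=> supp_xy [l act_y_l]; pose c j := x 0 j / y 0 j.
exists (\row_j (c j * l 0 j)).
have -> : (fun t => act w mu t x) =
          (fun v => \row_j (c j * v 0 j)) \o (fun t => act w mu t y).
  apply: funext => t /=; apply/rowP => j; rewrite !mxE /c.
  have [y0|yn0] := eqVneq (y 0 j) 0; first by rewrite (supp_xy _ y0) y0 !mulr0.
  by rewrite mulrCA divfK.
exact: (continuous_cvg _ (@continuous_row_scale (CC R) _ c l)).
Qed.

Lemma lim_exists_in_L (S T : {set 'I_n}) (mu : 'rV[int]_r)
    (x y : 'rV[CC R]_n) :
  S \subset T -> in_L S x -> in_L T y ->
  lim_exists w mu y -> lim_exists w mu x.
Proof.
move=> /fintype.subsetP sST Lx Ly; apply: lim_exists_sub_support => i /eqP y0.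
by apply/eqP; apply: contraTT y0 => /(Lx i).1/sST/(Ly i).2.
Qed.

Lemma in_S_between (Q : 'M[int]_r) (chi lam : 'rV[int]_r)
    (xA x xC : 'rV[CC R]_n) :
  (forall mu, lim_exists w mu xA -> lim_exists w mu x) ->
  (forall mu, lim_exists w mu x -> lim_exists w mu xC) ->
  in_S w Q chi lam xA -> in_S w Q chi lam xC -> in_S w Q chi lam x.
Proof.
move=> limAx limxC [[muA [limA_muA chi_muA]] _ [_ limA_lam _] _].
move=> [_ ind_lam [lam_neq0 _ min_lamC] uniqC].
have min_lam : minimizer w Q chi lam x.
  by split=> // [|mu mu_neq0 /limxC]; [exact: limAx | exact: min_lamC].
split=> //; first by exists muA; split=> //; exact: limAx.
move=> mu ind_mu [mu_neq0 lim_mu min_mu]; apply: uniqC => //.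
split=> // [|nu nu_neq0 lim_nu]; first exact: limxC.
by apply: le_trans (min_lamC nu nu_neq0 lim_nu); apply: min_mu => //; exact: limAx.
Qed.

Lemma in_L_indicator (S : {set 'I_n}) :
  in_L S (\row_i (i \in S)%:R : 'rV[CC R]_n).
Proof. by move=> i; rewrite mxE; case: (i \in S); rewrite ?eqxx ?oner_eq0. Qed.

End LimitsAndSupports.

Theorem lemma3p16 (R : realType) (n r : nat) (w : 'I_n -> 'rV[int]_r)
  (Q : 'M[int]_r) (chi lam : 'rV[int]_r) :
  inner_product R Q ->
  in_Lambda R w Q chi lam ->
  forall A B C : {set 'I_n},
    C \subset A ->
    (forall x : 'rV[CC R]_n, in_L C x -> in_S w Q chi lam x) ->
    (forall x : 'rV[CC R]_n, in_L A x -> in_S w Q chi lam x) ->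
    C \subset B -> B \subset A ->
    forall x : 'rV[CC R]_n, in_L B x -> in_S w Q chi lam x.
Proof.
move=> _ _ A B C _ SC SA sCB sBA x Lx.
have LA := in_L_indicator R A; have LC := in_L_indicator R C.
apply: (in_S_between _ _ (SA _ LA) (SC _ LC)) => mu.
  exact: lim_exists_in_L sBA Lx LA.
exact: lim_exists_in_L sCB LC Lx.
Qed.
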